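(* For all fixed $x,y\ge 1$, the expected number of edges in the random task-dependency graph resulting from the $(x,y)$ edge-removal process on $n$ vertices is $\Theta(n)$ as $n\to\infty$.
   Context: A task-dependency graph is a finite directed acyclic graph (no loops, no multiple edges). A vertex is initial if it has in-degree $0$ and terminal if it has out-degree $0$ (an isolated vertex is both). The $(x,y)$ edge-removal process on $n$ vertices: start with the task-dependency graph on $\{1,\dots,n\}$ having all edges $(a,b)$ with $a<b$. Edges are removed uniformly at random, one at a time; a removal that would cause more than $x$ initial vertices or more than $y$ terminal vertices is cancelled. The process terminates when no further edge can be removed. *)

From HB Require Import structures.
From mathcomp Require Import all_boot all_order all_algebra all_fingroup.
Set Implicit Arguments. Unset Strict Implicit. Unset Printing Implicit Defensive.
Import Order.TTheory GRing.Theory Num.Theory.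

Notation Edge n := {e : 'I_n * 'I_n | (e.1 < e.2)%N}.

Definition is_initial n (G : {set Edge n}) (v : 'I_n) : bool :=
  [forall e in G, (val e).2 != v].
Definition is_terminal n (G : {set Edge n}) (v : 'I_n) : bool :=
  [forall e in G, (val e).1 != v].
Definition num_initial n (G : {set Edge n}) : nat := #|[set v | is_initial G v]|.
Definition num_terminal n (G : {set Edge n}) : nat := #|[set v | is_terminal G v]|.

Definition try_remove (x y : nat) n (G : {set Edge n}) (e : Edge n) : {set Edge n} :=
  if [&& e \in G, (num_initial (G :\ e) <= x)%N & (num_terminal (G :\ e) <= y)%N]
  then G :\ e else G.

(* The process driven by the uniformly random ordering of the edges given by
   the permutation s: edges are attempted in the order s e_1, s e_2, ... *)
Definition final_graph (x y : nat) n (s : {perm Edge n}) : {set Edge n} :=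
  foldl (@try_remove x y n) [set: Edge n] [seq s e | e : Edge n].

Definition expected_edges (x y n : nat) : rat :=
  ((\sum_(s : {perm Edge n}) (#|final_graph x y s|)%:R) / (#|{perm Edge n}|)%:R)%R.

From HB Require Import structures.
From mathcomp Require Import all_boot all_order all_algebra all_fingroup.
From mathcomp Require Import zify.
Import Order.TTheory GRing.Theory Num.Theory.

Set Implicit Arguments.
Unset Strict Implicit.
Unset Printing Implicit Defensive.

(* Call an edge critical if it is the only edge entering its head or the only
   edge leaving its tail.  The complete graph has one initial and one terminal
   vertex, and the process never exceeds x initial and y terminal vertices.  A
   removal that fails to go through therefore strictly increases one of these
   counts, which only happens for critical edges; since the graph only shrinks,
   every edge of the final graph is still critical there.  Critical edges are
   injective on heads or on tails, so there are at most 2n of them, while every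
   non-initial vertex has an entering edge, so there are at least n - x edges.
   The bounds hold for every ordering, hence for the mean. *)

Section SoleEdges.
Variables (T V : finType) (f : T -> V).

Definition sole (G : {set T}) (e : T) : bool :=
  [forall e' in G, (f e' == f e) ==> (e' == e)].

Lemma unhit_setE (G : {set T}) : [set v | [forall e in G, f e != v]] = ~: (f @: G).
Proof.
apply/setP => v; rewrite in_setC inE; apply/forall_inP/idP => [hG | nhit e eG].
  by apply/imsetP => -[e eG ve]; have := hG e eG; rewrite ve eqxx.
by apply: contraNneq nhit => <-; apply: imset_f.
Qed.

Lemma sole_subset (F G : {set T}) (e : T) : F \subset G -> sole G e -> sole F e.
Proof. by move=> /subsetP FG /forall_inP hG; apply/forall_inP => e' /FG; apply: hG. Qed.

Lemma imset_setD1_notsole (G : {set T}) (e : T) :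
  e \in G -> ~~ sole G e -> f @: (G :\ e) = f @: G.
Proof.
move=> eG /forall_inPn[e' e'G]; rewrite negb_imply => /andP[/eqP fe' e'e].
apply/eqP; rewrite eqEsubset imsetS ?subD1set //=.
apply/subsetP => _ /imsetP[d dG ->]; have [-> | de] := eqVneq d e.
  by rewrite -fe'; apply: imset_f; rewrite !inE e'e.
by apply: imset_f; rewrite !inE de.
Qed.

Lemma card_sole (G : {set T}) : #|[set e in G | sole G e]| <= #|V|.
Proof.
rewrite -(card_in_imset (f := f)) ?max_card //.
move=> d e; rewrite !inE => /andP[_ /forall_inP sole_d] /andP[eG _] fde.
by apply/esym/eqP; apply: (implyP (sole_d e eG)); rewrite fde.
Qed.

End SoleEdges.

Section Process.
Variables (x y n : nat).

Definition head (e : Edge n) : 'I_n := (val e).2.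
Definition tail (e : Edge n) : 'I_n := (val e).1.

Definition critical (G : {set Edge n}) (e : Edge n) : bool :=
  sole head G e || sole tail G e.

Definition bounded (G : {set Edge n}) : bool :=
  (num_initial G <= x) && (num_terminal G <= y).

Lemma num_initialE (G : {set Edge n}) : num_initial G = #|~: (head @: G)|.
Proof. by rewrite /num_initial -unhit_setE. Qed.

Lemma num_terminalE (G : {set Edge n}) : num_terminal G = #|~: (tail @: G)|.
Proof. by rewrite /num_terminal -unhit_setE. Qed.

Lemma critical_subset (F G : {set Edge n}) (e : Edge n) :
  F \subset G -> critical G e -> critical F e.
Proof. by move=> FG /orP[] /(sole_subset FG) solF; rewrite /critical solF ?orbT. Qed.

Lemma bounded_setD1_notcritical (G : {set Edge n}) (e : Edge n) :
  bounded G -> e \in G -> ~~ critical G e -> bounded (G :\ e).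
Proof.
rewrite negb_or => bG eG /andP[nsole_head nsole_tail].
by rewrite /bounded num_initialE num_terminalE !imset_setD1_notsole
  -?num_initialE -?num_terminalE.
Qed.

Lemma try_remove_subset (G : {set Edge n}) (e : Edge n) : try_remove x y G e \subset G.
Proof. by rewrite /try_remove; case: ifP => _; rewrite ?subD1set. Qed.

Lemma try_remove_bounded (G : {set Edge n}) (e : Edge n) :
  bounded G -> bounded (try_remove x y G e).
Proof. by rewrite /try_remove /bounded; case: ifP => // /and3P[_ -> ->]. Qed.

Lemma try_remove_kept_critical (G : {set Edge n}) (e : Edge n) :
  bounded G -> e \in try_remove x y G e -> critical (try_remove x y G e) e.
Proof.
rewrite /try_remove => bG; case: ifPn => [_|cancelled eG]; first by rewrite !inE eqxx.
apply: contraNT cancelled => /(bounded_setD1_notcritical bG eG).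
by rewrite eG.
Qed.

Lemma foldl_try_remove_subset (l : seq (Edge n)) (G : {set Edge n}) :
  foldl (@try_remove x y n) G l \subset G.
Proof.
elim: l G => [|e l IH] G /=; first exact: subxx.
exact: subset_trans (IH _) (try_remove_subset G e).
Qed.

Lemma foldl_try_remove_bounded (l : seq (Edge n)) (G : {set Edge n}) :
  bounded G -> bounded (foldl (@try_remove x y n) G l).
Proof. by elim: l G => [|e l IH] G //= bG; apply/IH/try_remove_bounded. Qed.

Lemma foldl_try_remove_critical (l : seq (Edge n)) (G : {set Edge n}) (e : Edge n) :
  bounded G -> e \in l -> e \in foldl (@try_remove x y n) G l ->
  critical (foldl (@try_remove x y n) G l) e.
Proof.
elim: l G => [|d l IH] G //= bG; rewrite inE => /predU1P[-> | el] eF.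
  have sub := foldl_try_remove_subset l (try_remove x y G d).
  apply: (critical_subset sub) (try_remove_kept_critical bG _).
  exact: subsetP sub _ eF.
exact: IH (try_remove_bounded _ bG) el eF.
Qed.

Lemma card_all_critical (G : {set Edge n}) :
  {in G, forall e, critical G e} -> #|G| <= n + n.
Proof.
move=> Gcrit.
have -> : G = [set e in G | sole head G e] :|: [set e in G | sole tail G e].
  by apply/setP => e; rewrite !inE -andb_orr; case: (boolP (e \in G)) => // /Gcrit.
apply: leq_trans (leq_card_setU _ _) (leq_add _ _);
  by apply: leq_trans (card_sole _ _) _; rewrite card_ord.
Qed.

Lemma card_ge_num_initial (G : {set Edge n}) : n <= #|G| + num_initial G.
Proof.
rewrite num_initialE -[X in X <= _](card_ord n) -(cardsC (head @: G)) leq_add2r.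
exact: leq_imset_card.
Qed.

Lemma bounded_complete : (1 <= x)%N -> (1 <= y)%N -> bounded [set: Edge n].
Proof.
move=> hx hy; apply/andP; split.
- apply: leq_trans hx; apply/card_le1_eqP => u v; rewrite !inE.
  move=> /forall_inP Hu /forall_inP Hv; case: (ltngtP u v) => [uv|vu|/val_inj //].
    by have := Hv (exist _ (u, v) uv) (in_setT _); rewrite eqxx.
  by have := Hu (exist _ (v, u) vu) (in_setT _); rewrite eqxx.
- apply: leq_trans hy; apply/card_le1_eqP => u v; rewrite !inE.
  move=> /forall_inP Hu /forall_inP Hv; case: (ltngtP u v) => [uv|vu|/val_inj //].
    by have := Hu (exist _ (u, v) uv) (in_setT _); rewrite eqxx.
  by have := Hv (exist _ (v, u) vu) (in_setT _); rewrite eqxx.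
Qed.

Lemma final_graph_bounds (s : {perm Edge n}) : (1 <= x)%N -> (1 <= y)%N ->
  n <= #|final_graph x y s| + x /\ #|final_graph x y s| <= n + n.
Proof.
move=> hx hy; have bT := bounded_complete hx hy.
have /andP[ini _] := foldl_try_remove_bounded [seq s e | e : Edge n] bT.
split; first exact: leq_trans (card_ge_num_initial _) (leq_add _ ini).
apply: card_all_critical => e eF; apply: foldl_try_remove_critical bT _ eF.
by rewrite -(permKV s e) codom_f.
Qed.

End Process.

Local Open Scope ring_scope.

Lemma ler_mean (R : numFieldType) (I : finType) (F : I -> R) (a : R) :
  (0 < #|I|)%N -> (forall i, a <= F i) -> a <= (\sum_i F i) / #|I|%:R.
Proof.
move=> I0 aF; rewrite ler_pdivlMr ?ltr0n // mulr_natr -sumr_const.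
by apply: ler_sum => i _; apply: aF.
Qed.

Lemma ger_mean (R : numFieldType) (I : finType) (F : I -> R) (b : R) :
  (0 < #|I|)%N -> (forall i, F i <= b) -> (\sum_i F i) / #|I|%:R <= b.
Proof.
move=> I0 Fb; rewrite ler_pdivrMr ?ltr0n // mulr_natr -sumr_const.
by apply: ler_sum => i _; apply: Fb.
Qed.

Theorem mainTheorem8 (x y : nat) (hx : (1 <= x)%N) (hy : (1 <= y)%N) :
  exists (c1 c2 : rat) (N : nat), 0 < c1 /\ 0 < c2 /\
    forall n : nat, (N <= n)%N ->
      c1 * n%:R <= expected_edges x y n /\ expected_edges x y n <= c2 * n%:R.
Proof.
exists (1/2), 2, (x + x)%N; split=> //; split=> // n hn.
have perm0 : (0 < #|{perm Edge n}|)%N by apply/card_gt0P; exists 1%g.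
split; [apply: ler_mean | apply: ger_mean] => // s;
  have [lo hi] := final_graph_bounds s hx hy.
- by rewrite mul1r ler_pdivrMl // -natrM ler_nat; lia.
- by rewrite -natrM ler_nat; lia.
Qed.
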